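(* If $X$ is a perfectly normal $T_1$ space, then $T''(X)$ is a (Von Neumann) regular ring.
   Context: $C(X)$ is the ring of real-valued continuous functions on $X$; a cozero set is a set $\{x: h(x)\neq 0\}$ with $h\in C(X)$. $T''(X)$ is the ring (under pointwise operations) of all functions $f\colon X\to\mathbb{R}$ for which there is a dense cozero set $U$ of $X$ with $f|_U$ continuous. A commutative ring $R$ is regular if for each $a\in R$ there is $x\in R$ with $a=a^2x$. $X$ is perfectly normal if it is normal and every closed set is a $G_\delta$-set (equivalently, every closed set is a zero set). *)

From mathcomp Require Import all_boot all_order all_algebra.
From mathcomp Require Import all_classical all_reals topology borel_hierarchy normedtype.
Import Order.TTheory GRing.Theory Num.Theory.
Import numFieldTopology.Exports numFieldNormedType.Exports.
Local Open Scope classical_set_scope.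
Local Open Scope ring_scope.

Definition perfectly_normal (X : topologicalType) : Prop :=
  normal_space X /\ forall A : set X, closed A -> Gdelta A.

Definition cozero_set {R : realType} (X : topologicalType) (U : set X) : Prop :=
  exists h : X -> R, continuous h /\ U = [set x | h x != 0].

Definition Tpp (R : realType) (X : topologicalType) (f : X -> R) : Prop :=
  exists U : set X, @cozero_set R X U /\ dense U /\ {within U, continuous f}.

Definition Tpp_regular (R : realType) (X : topologicalType) : Prop :=
  forall f : X -> R, Tpp R X f ->
    exists g : X -> R, Tpp R X g /\ forall x, f x = f x ^+ 2 * g x.

(* Let f be continuous on a dense open cozero set U and put A = {x ∈ U | f x ≠ 0}.
   Then x ↦ (f x)⁻¹ (with 0⁻¹ = 0) is continuous on V = A ∪ (U \ cl A): on A as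
   the inverse of a nonvanishing continuous function, and on the open set U \ cl A
   because f vanishes there. V is open and dense, and in a perfectly normal space
   every open set O is a cozero set: writing X \ O = ⋂ Fₙ with Fₙ open, Urysohn
   functions fₙ : X → [0,1] vanishing off O and equal to 1 off Fₙ have cozero sets
   covering O, and Σ 2⁻⁽ⁿ⁺¹⁾ fₙ is continuous with cozero set O. As f = f² f⁻¹
   pointwise, f⁻¹ is the required quasi-inverse. *)

From mathcomp Require Import all_boot all_order all_algebra.
From mathcomp Require Import all_classical all_reals topology borel_hierarchy normedtype.
From mathcomp Require Import sequences numfun ring.
Import Order.TTheory GRing.Theory Num.Theory.
Import numFieldTopology.Exports numFieldNormedType.Exports.
Local Open Scope classical_set_scope.
Local Open Scope ring_scope.

Lemma continuous_uniform_approx {R : numFieldType} {X : topologicalType}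
    (S : nat -> X -> R) (f : X -> R) :
  (forall n, continuous (S n)) ->
  (forall e, 0 < e -> exists n, forall x, `|f x - S n x| < e) ->
  continuous f.
Proof.
move=> Sc approx x; apply/cvgrPdist_lt => e e_gt0.
have e3_gt0 : 0 < e / 3 by rewrite divr_gt0.
have [n Sn] := approx _ e3_gt0.
near=> y.
have Sxy : `|S n x - S n y| < e / 3.
  by near: y; exact: (cvgrPdist_lt _ _).1 (Sc n x) _ e3_gt0.
have Sny : `|S n y - f y| < e / 3 by rewrite distrC.
rewrite (_ : e = e / 3 + e / 3 + e / 3); last by field.
have -> : f x - f y = (f x - S n x) + (S n x - S n y) + (S n y - f y) by ring.
by rewrite (le_lt_trans (ler_normD _ _)) // ltrD // (le_lt_trans (ler_normD _ _)) // ltrD.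
Unshelve. all: by end_near.
Qed.

Section cozero_set_bigcup.
Context {R : realType} {X : topologicalType} (g : nat -> X -> R).
Hypotheses (g_cont : forall n, continuous (g n))
  (g_ge0 : forall n x, 0 <= g n x) (g_le1 : forall n x, g n x <= 1).

Let w (k : nat) : R := 2^-1 ^+ k.+1.
Let S (n : nat) (x : X) : R := \sum_(0 <= k < n) w k * g k x.

Let w_gt0 k : 0 < w k. Proof. by rewrite exprn_gt0 ?invr_gt0. Qed.

Let half_expr_ge0 n : 0 <= 2^-1 ^+ n :> R.
Proof. by rewrite exprn_ge0 ?invr_ge0. Qed.

Let sum_w n m : (n <= m)%N -> \sum_(n <= k < m) w k = 2^-1 ^+ n - 2^-1 ^+ m.
Proof.
move=> nm; rewrite -opprB -telescope_sumr // -sumrN.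
by apply: eq_bigr => k _; rewrite /w exprS; field.
Qed.

Let S_ge0 x n : 0 <= S n x.
Proof. by apply: sumr_ge0 => k _; rewrite mulr_ge0 // ltW. Qed.

Let S_tail x n m : (n <= m)%N -> 0 <= S m x - S n x <= 2^-1 ^+ n.
Proof.
move=> nm; rewrite /S (big_cat_nat (leq0n n) nm) /= addrC addrK.
apply/andP; split; first by apply: sumr_ge0 => k _; rewrite mulr_ge0 // ltW.
apply: (le_trans (y := \sum_(n <= k < m) w k)).
  by apply: ler_sum => k _; rewrite ler_piMr // ltW.
by rewrite sum_w // gerBl.
Qed.

Let S_ub x n : ubound (range (S ^~ x)) (S n x + 2^-1 ^+ n).
Proof.
move=> _ [m _ <-]; have [nm|mn] := leqP n m.
  by have /andP[_] := S_tail x _ _ nm; rewrite lerBlDl.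
have /andP[+ _] := S_tail x _ _ (ltnW mn); rewrite subr_ge0 => /le_trans; apply.
by rewrite lerDl.
Qed.

Let h (x : X) : R := sup (range (S ^~ x)).

Let S_le_h x n : S n x <= h x.
Proof.
apply: sup_upper_bound; last by exists n.
by split; [exists (S 0 x), 0%N | exists (S 0 x + 2^-1 ^+ 0); exact: S_ub].
Qed.

Let h_le_S x n : h x <= S n x + 2^-1 ^+ n.
Proof. by apply: ge_sup; [exists (S 0 x), 0%N | exact: S_ub]. Qed.

Let S_cont n : continuous (S n).
Proof.
elim: n => [|n IH].
  by rewrite (_ : S 0 = cst 0); [exact: cst_continuous | apply/funext => x; rewrite /S big_geq].
rewrite (_ : S n.+1 = S n \+ (fun x => w n * g n x)); last first.
  by apply/funext => x; rewrite /S big_nat_recr.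
move=> x; apply: continuousD; first exact: IH.
by apply: continuousM; [exact: cst_continuous | exact: g_cont].
Qed.

Let h_cont : continuous h.
Proof.
apply: (continuous_uniform_approx _ _ S_cont) => e e_gt0.
have half_lt1 : `|2^-1 : R| < 1 by rewrite ger0_norm ?invr_ge0 // invf_lt1 ?ltr1n.
have [n _ small] := cvgr0_norm_lt _ (cvg_geometric 1 half_lt1) _ e_gt0.
exists n => x; rewrite ger0_norm ?subr_ge0 ?S_le_h //.
apply: le_lt_trans (small n (leqnn n)).
by rewrite /geometric /= mul1r ger0_norm // lerBlDl h_le_S.
Qed.

Let h_eq0 x : (forall n, g n x = 0) -> h x = 0.
Proof.
move=> g0; apply/eqP; rewrite eq_le (le_trans (S_ge0 x 0) (S_le_h x 0)) andbT.
apply: ge_sup; first by exists (S 0 x), 0%N.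
by move=> _ [n _ <-]; rewrite /S big1 // => k _; rewrite g0 mulr0.
Qed.

Let h_gt0 x n : g n x != 0 -> 0 < h x.
Proof.
move=> gn; apply: lt_le_trans (S_le_h x n.+1).
by rewrite /S big_nat_recr //= ltr_wpDl ?S_ge0 // mulr_gt0 // lt_def gn g_ge0.
Qed.

Lemma cozero_set_bigcup : @cozero_set R X (\bigcup_n [set x | g n x != 0]).
Proof.
exists h; split => //; apply/seteqP; split => [x [n _ gn]|x /= hx].
  by rewrite /= gt_eqF // (h_gt0 _ _ gn).
apply: contrapT => nx; move/eqP: hx; apply; apply: h_eq0 => n.
by apply/eqP; apply: contrapT => /negP gn; apply: nx; exists n.
Qed.

End cozero_set_bigcup.

Lemma perfectly_normal_open_cozero {R : realType} {X : topologicalType} {O : set X} :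
  perfectly_normal X -> open O -> @cozero_set R X O.
Proof.
move=> [normX closed_Gdelta] oO.
have [F oF OCE] := closed_Gdelta _ (open_closedC oO).
have urysohn n : exists f : X -> R, [/\ continuous f,
    forall x, ~ O x -> f x = 0, forall x, ~ F n x -> f x = 1,
    forall x, 0 <= f x & forall x, f x <= 1].
  have disj : ~` O `&` ~` F n = set0.
    by apply/disjoints_subset; rewrite setCK OCE; exact: bigcap_inf.
  have [f [fc f0 f1 f01]] := @urysohn_ext_itv X R normX _ _ _ _
    (open_closedC oO) (open_closedC (oF n)) disj ltr01.
  have /all_and2[f_ge0 f_le1] x : 0 <= f x /\ f x <= 1.
    by apply/andP; have := f01 _ (imageT f x); rewrite /= in_itv.
  by exists f; split => // [x Ox|x Fx]; [apply: f0 | apply: f1]; exists x.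
have [f /all_and5[fc f0 f1 f_ge0 f_le1]] := choice urysohn.
rewrite (_ : O = \bigcup_n [set x | f n x != 0]); first exact: cozero_set_bigcup.
apply/seteqP; split => [x Ox|x [n _ fnx]].
  have [n _ Fnx] : (\bigcup_n ~` F n) x by rewrite -setC_bigcap -OCE => /(_ Ox).
  by exists n => //=; rewrite f1 ?oner_neq0.
by apply: contrapT => Ox; move: fnx; rewrite /= f0 ?eqxx.
Qed.

Lemma open_cozero_set {R : realType} {X : topologicalType} (U : set X) :
  @cozero_set R X U -> open U.
Proof.
move=> [h [hc ->]]; apply: (@open_comp _ _ h [set r | r != 0]); last exact: open_neq.
by move=> x _; exact: hc.
Qed.

Lemma dense_setU_setICclosure {X : topologicalType} (U A : set X) :
  dense U -> dense (A `|` (U `&` ~` closure A)).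
Proof.
move=> dU W W0 oW; have [u [Wu Uu]] := dU W W0 oW.
have [[a [Wa Aa]]|WA0] := pselect (W `&` A !=set0); first by exists a; split => //; left.
exists u; split => //; right; split => // clu; apply: WA0.
by have [a [Aa Wa]] := clu W (open_nbhs_nbhs (conj oW Wu)); exists a.
Qed.

Section inverse_within.
Context {R : realType} {X : topologicalType} (U : set X) (f : X -> R).
Hypotheses (oU : open U) (fU : {within U, continuous f}).

Definition support_within : set X := U `&` [set x | f x != 0].

Definition inv_domain : set X :=
  support_within `|` (U `&` ~` closure support_within).

Let fc : {in U, continuous f}.
Proof. by rewrite -continuous_open_subspace. Qed.

Let open_exterior : open (U `&` ~` closure support_within).
Proof. by apply: openI => //; apply/closed_openC/closed_closure. Qed.

Lemma open_support_within : open support_within.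
Proof.
rewrite openE => x [Ux fx0]; apply: filterI; first exact: open_nbhs_nbhs.
exact: cvgr_neq0 (fc _ (mem_set Ux)) fx0.
Qed.

Lemma open_inv_domain : open inv_domain.
Proof. exact: openU open_support_within open_exterior. Qed.

Lemma continuous_inv_domain : {within inv_domain, continuous (fun x => (f x)^-1)}.
Proof.
rewrite continuous_open_subspace; last exact: open_inv_domain.
have f_eq0 y : U y -> ~ closure support_within y -> f y = 0.
  move=> Uy ncl; apply/eqP; apply: contrapT => /negP fy0.
  by apply: ncl; exact: subset_closure.
move=> x /set_mem [[Ux fx0]|[Ux nclx]]; first exact: continuousV fx0 (fc _ (mem_set Ux)).
apply: cvg_near_cst; rewrite f_eq0 //.
have : nbhs x (U `&` ~` closure support_within) by exact: open_nbhs_nbhs.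
by apply: filterS => y [Uy ncly]; rewrite f_eq0.
Qed.

End inverse_within.

Lemma sqrf_mulV (F : fieldType) (x : F) : x = x ^+ 2 * x^-1.
Proof.
have [->|x_neq0] := eqVneq x 0; first by rewrite expr0n mul0r.
by rewrite expr2 mulfK.
Qed.

Theorem theorem3p2 (R : realType) (X : topologicalType) :
  perfectly_normal X -> @accessible_space X -> Tpp_regular R X.
Proof.
move=> pnX _ f [U [cozU [dU fU]]].
have oU := open_cozero_set _ cozU.
exists (fun x => (f x)^-1); split => [|x]; last exact: sqrf_mulV.
exists (inv_domain U f); split.
  exact: perfectly_normal_open_cozero pnX (open_inv_domain _ _ oU fU).
by split; [exact: dense_setU_setICclosure | exact: continuous_inv_domain].
Qed.
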